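(* Let $U,K\ge1$ and $t_{ji}\in(0,1]$ for $j=1,\ldots,U$, $i=1,\ldots,K$. Consider the POMDP with world states $w_{10}$ and $w_{ji}$ ($j=1,\ldots,U$, $i=1,\ldots,K$), actions $A=\{1,\ldots,K\}$, and sensor states $S=\{1,\ldots,U\}$, where (setting $w_{j,0}:=w_{j-1,K}$ for $j\ge2$) world state $w_{j,i-1}$ is deterministically sensed as $s=j$ for all $j=1,\ldots,U$, $i=1,\ldots,K$, and $w_{UK}$ is sensed as $s=1$. From $w_{j,i-1}$, action $i$ takes the agent to $w_{ji}$ with probability $t_{ji}$ and to $w_{10}$ with probability $1-t_{ji}$, and every other action takes it to $w_{10}$; from $w_{UK}$ every action takes it to $w_{10}$. The reward is $1$ at $w_{UK}$ and $0$ elsewhere. Write $\pi_{ji}=\pi(a=i|s=j)$. The optimal memoryless policy (maximizer of the average reward $p^\pi(w_{UK})$) is given, for $j=1,\ldots,U$, by $\pi_{j1}=c_jd_j$ and $\pi_{ji}=\pi_{j,i-1}+c_je_j\,t_{j1}\pi_{j1}\cdots t_{j,i-1}\pi_{j,i-1}$ for $i=2,\ldots,K$, where $d_j=1+t_{11}\pi_{11}+\cdots+t_{11}\pi_{11}\cdots t_{j-1,K}\pi_{j-1,K}$ (the sum of $1$ and all products $t_{11}\pi_{11}\cdots t_{kl}\pi_{kl}$ over indices $(k,l)$ preceding $(j,1)$ in the order $(1,1),\ldots,(1,K),(2,1),\ldots$), $e_j=t_{11}\pi_{11}\cdots t_{j-1,K}\pi_{j-1,K}$, and $c_j$ is the unique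 real positive solution of $\pi_{j1}+\cdots+\pi_{jK}=1$. Empty products are $1$ and empty sums $0$.
   Context: Under a stationary policy $\pi$ the world states form a Markov chain; $p^\pi$ denotes its stationary distribution and the expected reward per time step is $p^\pi(w_{UK})$. Note $d_j,e_j$ depend only on the policy entries for sensor states $1,\ldots,j-1$, so the $c_j$ and $\pi_{j\cdot}$ are determined successively for $j=1,\ldots,U$. *)

From mathcomp Require Import all_boot all_order all_algebra.
From mathcomp Require Export reals.
Unset Printing Implicit Defensive.
Import Order.TTheory GRing.Theory Num.Theory.
Local Open Scope ring_scope.

(* Conventions (all 0-based): sensor state j+1 <-> j < U, action i+1 <-> i < K,
   t j i = t_{j+1,i+1}, pi j i = pi(a=i+1 | s=j+1).
   World states are 'I_(U*K).+1: index 0 is w_{10}, index (j-1)*K+i is w_{ji}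
   (1-based j,i); hence ord_max (= U*K) is w_{UK}.  A state n < U*K is
   w_{j,i-1} with j-1 = n %/ K, i-1 = n %% K, sensed as s = j; w_{UK} is
   sensed as s = 1 and moves to w_{10} under every action. *)

Section Defs.
Variable R : realType.

Definition is_policy (U K : nat) (pi : nat -> nat -> R) : Prop :=
  forall j, (j < U)%N ->
    (forall i, (i < K)%N -> 0 <= pi j i) /\ \sum_(i < K) pi j i = 1.

Definition trans (U K : nat) (t pi : nat -> nat -> R)
    (n m : 'I_(U * K).+1) : R :=
  if (n < U * K)%N then
    let a := t (n %/ K)%N (n %% K)%N * pi (n %/ K)%N (n %% K)%N in
    (if (m : nat) == n.+1 then a else 0) + (if (m : nat) == 0%N then 1 - a else 0)
  else (if (m : nat) == 0%N then 1 else 0).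

Definition is_stationary (N : nat) (P : 'I_N -> 'I_N -> R) (p : 'I_N -> R) : Prop :=
  (forall m, 0 <= p m) /\ \sum_m p m = 1 /\
  (forall m, \sum_n p n * P n m = p m).

Definition prefprod (K : nat) (t pi : nat -> nat -> R) (q : nat) : R :=
  \prod_(r < q) (t (r %/ K)%N (r %% K)%N * pi (r %/ K)%N (r %% K)%N).

(* d_j (0-based j): 1 + all products over indices preceding (j+1,1) *)
Definition dcoef (K : nat) (t pi : nat -> nat -> R) (j : nat) : R :=
  \sum_(q < (j * K).+1) prefprod K t pi q.

Definition ecoef (K : nat) (t pi : nat -> nat -> R) (j : nat) : R :=
  prefprod K t pi (j * K).

Definition formula (U K : nat) (t : nat -> nat -> R) (c : nat -> R)
    (pi : nat -> nat -> R) : Prop :=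
  forall j, (j < U)%N ->
    pi j 0%N = c j * dcoef K t pi j /\
    (forall i, (0 < i < K)%N ->
       pi j i = pi j i.-1 + c j * ecoef K t pi j * \prod_(l < i) (t j l * pi j l)).

Definition admissible (U K : nat) (t : nat -> nat -> R) (c : nat -> R)
    (pi : nat -> nat -> R) : Prop :=
  (forall j, (j < U)%N -> 0 < c j) /\ formula U K t c pi /\
  (forall j, (j < U)%N -> \sum_(i < K) pi j i = 1).

End Defs.

Arguments is_policy {R} U K pi.
Arguments trans {R} U K t pi n m.
Arguments is_stationary {R} N P p.
Arguments prefprod {R} K t pi q.
Arguments dcoef {R} K t pi j.
Arguments ecoef {R} K t pi j.
Arguments formula {R} U K t c pi.
Arguments admissible {R} U K t c pi.

(* Under a policy the world states form a renewal chain: from the [r]-th state the agent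
   advances with probability [x_r = t pi] and otherwise restarts at [w_10]. Its stationary law
   is proportional to the prefix products [P_m = x_0 ... x_(m-1)], so the reward is [P_N / D_N]
   with [D_r = P_0 + ... + P_r]. The recursions of the proposition say exactly
   [pi_ji = c_j D_(j,i)]; hence for any other policy [pi'] the sum [sum_r D_r (x'_r / x_r - 1)]
   equals [sum_j (1 - 1) / c_j = 0], and by Abel summation and the log-sum inequality this forces
   [P'_N / D'_N <= P_N / D_N]. Row by row, the recursion is a polynomial in [c_j] that is
   strictly increasing, so [c_j] exists by the intermediate value theorem and is unique. *)

From mathcomp Require Import all_boot all_order all_algebra reals exp.
From mathcomp Require Import ring lra zify.
Import Order.TTheory GRing.Theory Num.Theory.
Local Open Scope ring_scope.
Set Implicit Arguments.
Unset Strict Implicit.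

Lemma summation_by_parts (V : comNzRingType) (a L : nat -> V) n :
  \sum_(m < n.+1) a m * L m =
  (\sum_(m < n.+1) a m) * L n - \sum_(r < n) (\sum_(m < r.+1) a m) * (L r.+1 - L r).
Proof.
elim: n => [|n IH]; first by rewrite big_ord0 subr0 !big_ord1.
rewrite [LHS]big_ord_recr /= IH (big_ord_recr n.+1) /=.
set A := \sum_(m < n.+1) a m; rewrite [\sum_(r < n.+1) _]big_ord_recr /= -/A.
set S := \sum_(r < n) _; ring.
Qed.

Section RenewalRatio.
Variable R : realType.
Implicit Types (x y : nat -> R).

Lemma ln_le_subr1 (u : R) : 0 < u -> ln u <= u - 1.
Proof.
by move=> u_gt0; have := @le_ln1Dx R (u - 1); rewrite (addrC 1) subrK; apply; lra.
Qed.

Lemma log_sum_le (I : finType) (a b : I -> R) :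
  (forall i, 0 < a i) -> (forall i, 0 < b i) ->
  \sum_i a i * ln (b i / a i) <= (\sum_i a i) * ln ((\sum_i b i) / \sum_i a i).
Proof.
move=> a_gt0 b_gt0.
have [i0 _ | I0] := pickP (@predT I); last by rewrite !big_pred0 ?mul0r.
have sum_gt0 (f : I -> R) : (forall i, 0 < f i) -> 0 < \sum_i f i.
  move=> f_gt0; rewrite (bigD1 i0) //= ltr_wpDr ?f_gt0 //.
  by apply: sumr_ge0 => i _; apply: ltW.
set A := \sum_i a i; set B := \sum_i b i; set q := B / A.
have A_gt0 : 0 < A by exact: sum_gt0.
have B_gt0 : 0 < B by exact: sum_gt0.
have q_gt0 : 0 < q by exact: divr_gt0.
have term i : a i * ln (b i / a i) <= a i * ln q + (b i / q - a i).
  have ai := a_gt0 i; have bi := b_gt0 i.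
  have := ler_wpM2l (ltW ai) (ln_le_subr1 (divr_gt0 (divr_gt0 bi ai) q_gt0)).
  rewrite [ln (_ / q)]ln_div ?posrE ?q_gt0 ?divr_gt0 // !mulrBr mulr1.
  rewrite mulrA (mulrCA (a i)) divff ?gt_eqF // mulr1.
  lra.
apply: le_trans (ler_sum _ (fun i _ => term i)) _.
rewrite big_split /= -mulr_suml big_split /= sumrN -mulr_suml -/A -/B.
by rewrite /q invf_div mulrCA divff ?gt_eqF // mulr1 subrr addr0.
Qed.

Definition cumprod x m : R := \prod_(s < m) x s.
Definition cumsum x n : R := \sum_(m < n.+1) cumprod x m.

Lemma cumprod0 x : cumprod x 0 = 1.
Proof. exact: big_ord0. Qed.

Lemma cumprodS x m : cumprod x m.+1 = cumprod x m * x m.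
Proof. exact: big_ord_recr. Qed.

Lemma cumsumS x n : cumsum x n.+1 = cumsum x n + cumprod x n.+1.
Proof. exact: big_ord_recr. Qed.

Lemma cumprod_ge0 x m : (forall s, (s < m)%N -> 0 <= x s) -> 0 <= cumprod x m.
Proof. by move=> x_ge0; apply: prodr_ge0 => s _; apply: x_ge0. Qed.

Lemma cumprod_gt0 x m : (forall s, (s < m)%N -> 0 < x s) -> 0 < cumprod x m.
Proof. by move=> x_gt0; apply: prodr_gt0 => s _; apply: x_gt0. Qed.

Lemma cumsum_ge1 x n : (forall s, (s < n)%N -> 0 <= x s) -> 1 <= cumsum x n.
Proof.
move=> x_ge0; rewrite /cumsum big_ord_recl cumprod0 lerDl.
apply: sumr_ge0 => m _; apply: cumprod_ge0 => s lt_sm; apply: x_ge0.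
by move: lt_sm; rewrite lift0; have := ltn_ord m; lia.
Qed.

Lemma cumsum_gt0 x n : (forall s, (s < n)%N -> 0 <= x s) -> 0 < cumsum x n.
Proof. by move=> x_ge0; apply: lt_le_trans ltr01 (cumsum_ge1 x_ge0). Qed.

(* In the coordinates [ln (x r)] the ratio [cumsum x n / cumprod x n] is convex with partial
   derivatives [- cumsum x r / cumprod x n]: the hypothesis is the tangent inequality at [x]. *)
Lemma cumprod_div_cumsum_le x y n :
  (forall s, (s < n)%N -> 0 < x s) -> (forall s, (s < n)%N -> 0 < y s) ->
  \sum_(r < n) cumsum x r * (y r / x r - 1) <= 0 ->
  cumprod y n / cumsum y n <= cumprod x n / cumsum x n.
Proof.
move=> x_gt0 y_gt0 grad_le0.
have Px_gt0 m : (m <= n)%N -> 0 < cumprod x m.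
  by move=> le_mn; apply: cumprod_gt0 => s lt_sm; apply: x_gt0; lia.
have Py_gt0 m : (m <= n)%N -> 0 < cumprod y m.
  by move=> le_mn; apply: cumprod_gt0 => s lt_sm; apply: y_gt0; lia.
have Sx_gt0 : 0 < cumsum x n by apply: cumsum_gt0 => s /x_gt0/ltW.
have Sy_gt0 : 0 < cumsum y n by apply: cumsum_gt0 => s /y_gt0/ltW.
pose L m := ln (cumprod y m / cumprod x m).
have L_step r : (r < n)%N -> L r.+1 - L r = ln (y r / x r).
  move=> lt_rn; have le_rn := ltnW lt_rn.
  have P_gt0 : 0 < cumprod y r / cumprod x r by rewrite divr_gt0 ?Px_gt0 ?Py_gt0.
  have xy_gt0 : 0 < y r / x r by rewrite divr_gt0 ?x_gt0 ?y_gt0.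
  rewrite /L !cumprodS invfM mulrACA [ln (_ * (y r / x r))]lnM ?posrE //.
  by rewrite addrAC subrr add0r.
have parts := summation_by_parts (cumprod x) L n; rewrite -/(cumsum x n) in parts.
have gibbs := @log_sum_le 'I_n.+1 (cumprod x \o val) (cumprod y \o val)
  (fun m => Px_gt0 m (ltn_ord m)) (fun m => Py_gt0 m (ltn_ord m)).
have grad : \sum_(r < n) cumsum x r * (L r.+1 - L r) <= 0.
  apply: le_trans grad_le0; apply: ler_sum => r _.
  rewrite L_step //; apply: ler_wpM2l.
    by apply/ltW/cumsum_gt0 => s lt_sr; apply/ltW/x_gt0; have := ltn_ord r; lia.
  by apply: ln_le_subr1; rewrite divr_gt0 ?x_gt0 ?y_gt0.
have : L n <= ln (cumsum y n / cumsum x n).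
  rewrite -(ler_pM2l Sx_gt0); apply: le_trans gibbs; rewrite -/(L _) parts; lra.
rewrite ler_ln ?posrE ?divr_gt0 ?Px_gt0 ?Py_gt0 //.
rewrite ler_pdivrMr ?Px_gt0 // mulrAC ler_pdivlMr // => le_ratio.
by rewrite ler_pdivrMr // mulrAC ler_pdivlMr // [_ * cumsum y n]mulrC.
Qed.

End RenewalRatio.

Section RowIteration.
Variable R : comNzRingType.
Implicit Types (c d e : R) (tj : nat -> R).

(* Solves the row recursion [pi_0 = c d], [pi_i = pi_(i-1) + c e prod_(l < i) tj_l pi_l]
   by also carrying the running product [prod_(l < i) tj_l pi_l] as second component. *)
Fixpoint row_iter c d e tj i : R * R :=
  if i is i'.+1 then
    let r := row_iter c d e tj i' in
    let p := r.2 * (tj i' * r.1) in (r.1 + c * e * p, p)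
  else (c * d, 1).

Lemma row_iter_prod c d e tj i :
  (row_iter c d e tj i).2 = \prod_(l < i) (tj l * (row_iter c d e tj l).1).
Proof. by elim: i => [|i IH]; rewrite ?big_ord0 // big_ord_recr /= IH. Qed.

Lemma row_iterS c d e tj i :
  (row_iter c d e tj i.+1).1 =
  (row_iter c d e tj i).1 + c * e * \prod_(l < i.+1) (tj l * (row_iter c d e tj l).1).
Proof. by rewrite -row_iter_prod. Qed.

Lemma row_iter_spec c d e tj (a : nat -> R) n : (0 < n)%N ->
  (forall i, (i < n)%N -> a i = (row_iter c d e tj i).1) <->
  a 0%N = c * d /\
  (forall i, (0 < i < n)%N -> a i = a i.-1 + c * e * \prod_(l < i) (tj l * a l)).
Proof.
have lt_l m (l : 'I_m) : (m <= n)%N -> (l < n)%N by move/(leq_trans (ltn_ord l)).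
move=> n_gt0; split=> [a_iter | [a0 aS]].
  split=> [|[//|i] /andP[_ lt_in]]; first exact: a_iter.
  rewrite !a_iter ?(ltnW lt_in) // row_iterS; congr (_ + _ * _).
  by apply: eq_bigr => l _; rewrite a_iter // (lt_l _ _ (ltnW lt_in)).
elim/ltn_ind=> -[|i] IH lt_in; first by rewrite a0.
rewrite row_iterS aS // IH ?(ltnW lt_in) //; congr (_ + _ * _).
by apply: eq_bigr => l _; rewrite IH // (lt_l _ _ (ltnW lt_in)).
Qed.

End RowIteration.

Lemma horner_row_iter (R : comNzRingType) (c d e : R) (tj : nat -> R) i :
  ((row_iter 'X d%:P e%:P (fun l => (tj l)%:P) i).1).[c] = (row_iter c d e tj i).1 /\
  ((row_iter 'X d%:P e%:P (fun l => (tj l)%:P) i).2).[c] = (row_iter c d e tj i).2.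
Proof.
elim: i => [|i [IH1 IH2]] /=; first by rewrite hornerM hornerX !hornerC.
by rewrite !(hornerD, hornerM, hornerC, hornerX) IH1 IH2.
Qed.

Section RowIterationReal.
Variable R : realType.
Implicit Types (c d e : R) (tj : nat -> R).

Lemma row_iter_c0 d e tj i : (row_iter 0 d e tj i).1 = 0.
Proof. by elim: i => [|i IH] /=; rewrite ?mul0r ?IH ?addr0. Qed.

Lemma row_iter_ge [c d e tj n i] : 0 <= c -> 0 <= d -> 0 <= e ->
  (forall l, (l < n)%N -> 0 <= tj l) -> (i <= n)%N ->
  c * d <= (row_iter c d e tj i).1 /\ 0 <= (row_iter c d e tj i).2.
Proof.
move=> c_ge0 d_ge0 e_ge0 tj_ge0; elim: i => [|i IH] lt_in /=; first by rewrite lexx ler01.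
have [ge_cd p_ge0] := IH (ltnW lt_in).
have a_ge0 := le_trans (mulr_ge0 c_ge0 d_ge0) ge_cd.
have p'_ge0 : 0 <= (row_iter c d e tj i).2 * (tj i * (row_iter c d e tj i).1).
  by rewrite !mulr_ge0 ?tj_ge0.
by split=> //; apply: le_trans ge_cd _; rewrite lerDl mulr_ge0 // mulr_ge0.
Qed.

Lemma row_iter_lt [c c' d e tj n i] : 0 <= c -> c < c' -> 0 < d -> 0 <= e ->
  (forall l, (l < n)%N -> 0 <= tj l) -> (i <= n)%N ->
  (row_iter c d e tj i).1 < (row_iter c' d e tj i).1 /\
  (row_iter c d e tj i).2 <= (row_iter c' d e tj i).2.
Proof.
move=> c_ge0 lt_cc' d_gt0 e_ge0 tj_ge0; elim: i => [|i IH] lt_in /=.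
  by rewrite ltr_pM2r // lexx.
have [lt_a le_p] := IH (ltnW lt_in).
have [ge_cd p_ge0] := row_iter_ge c_ge0 (ltW d_gt0) e_ge0 tj_ge0 (ltnW lt_in).
have a_ge0 := le_trans (mulr_ge0 c_ge0 (ltW d_gt0)) ge_cd.
have tji := tj_ge0 i lt_in.
have le_p' : (row_iter c d e tj i).2 * (tj i * (row_iter c d e tj i).1) <=
             (row_iter c' d e tj i).2 * (tj i * (row_iter c' d e tj i).1).
  by rewrite ler_pM ?mulr_ge0 // ler_wpM2l // ltW.
split=> //; apply: ltr_leD => //.
by rewrite ler_pM ?mulr_ge0 // ler_wpM2r // ltW.
Qed.

Lemma row_iter_sum_lt [c c' d e tj K] : (0 < K)%N -> 0 <= c -> c < c' -> 0 < d -> 0 <= e ->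
  (forall l, (l < K)%N -> 0 <= tj l) ->
  \sum_(i < K) (row_iter c d e tj i).1 < \sum_(i < K) (row_iter c' d e tj i).1.
Proof.
move=> K_gt0 c_ge0 lt_cc' d_gt0 e_ge0 tj_ge0; apply: ltr_sum => [|i _].
  by apply/hasP; exists (Ordinal K_gt0); rewrite ?mem_index_enum.
by have [] := row_iter_lt c_ge0 lt_cc' d_gt0 e_ge0 tj_ge0 (ltnW (ltn_ord i)).
Qed.

Lemma row_iter_sum_inj [c c' d e tj K] : (0 < K)%N -> 0 <= c -> 0 <= c' -> 0 < d -> 0 <= e ->
  (forall l, (l < K)%N -> 0 <= tj l) ->
  \sum_(i < K) (row_iter c d e tj i).1 = \sum_(i < K) (row_iter c' d e tj i).1 -> c = c'.
Proof.
move=> K_gt0 c_ge0 c'_ge0 d_gt0 e_ge0 tj_ge0 eq_sum.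
case: (ltgtP c c') => // [lt_cc' | lt_c'c].
  by have := row_iter_sum_lt K_gt0 c_ge0 lt_cc' d_gt0 e_ge0 tj_ge0; rewrite eq_sum ltxx.
by have := row_iter_sum_lt K_gt0 c'_ge0 lt_c'c d_gt0 e_ge0 tj_ge0; rewrite eq_sum ltxx.
Qed.

(* The row sum is a polynomial in [c], vanishing at [0] and at least [1] at [1 / d]. *)
Lemma row_iter_sum_root [d e tj K] : (0 < K)%N -> 0 < d -> 0 <= e ->
  (forall l, (l < K)%N -> 0 <= tj l) ->
  exists2 c, 0 < c & \sum_(i < K) (row_iter c d e tj i).1 = 1.
Proof.
move=> K_gt0 d_gt0 e_ge0 tj_ge0.
pose F := \sum_(i < K) (row_iter 'X d%:P e%:P (fun l => (tj l)%:P) i).1 - 1.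
have FE c : F.[c] = \sum_(i < K) (row_iter c d e tj i).1 - 1.
  rewrite hornerD horner_sum hornerN hornerC; congr (_ - _).
  by apply: eq_bigr => i _; case: (horner_row_iter c d e tj i).
have sum0 : \sum_(i < K) (row_iter 0 d e tj i).1 = 0.
  by apply: big1 => i _; apply: row_iter_c0.
have F0 : F.[0] <= 0 by rewrite FE sum0 sub0r lerN10.
have invd_ge0 : 0 <= d^-1 by rewrite invr_ge0 ltW.
have F1 : 0 <= F.[d^-1].
  rewrite FE subr_ge0 -(mulVf (lt0r_neq0 d_gt0)) (bigD1 (Ordinal K_gt0)) //=.
  have [ge1 _] := row_iter_ge invd_ge0 (ltW d_gt0) e_ge0 tj_ge0 (ltnW K_gt0).
  apply: le_trans ge1 _; rewrite lerDl; apply: sumr_ge0 => i _.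
  have [ge_i _] := row_iter_ge invd_ge0 (ltW d_gt0) e_ge0 tj_ge0 (ltnW (ltn_ord i)).
  by apply: le_trans ge_i; rewrite mulr_ge0 // ltW.
have [c /andP[c_ge0 _]] := poly_ivt invd_ge0 (introT andP (conj F0 F1)).
rewrite /root FE subr_eq0 => /eqP sum1; exists c => //.
by rewrite lt_neqAle c_ge0 andbT; apply: contra_eq_neq sum1 => <-; rewrite sum0 eq_sym oner_neq0.
Qed.

End RowIterationReal.

Section PolicyRows.
Variables (R : realType) (U K : nat) (t : nat -> nat -> R).
Hypothesis K_gt0 : (0 < K)%N.
Hypothesis t_gt0 : forall j i, (j < U)%N -> (i < K)%N -> 0 < t j i.
Implicit Types (pi : nat -> nat -> R) (c : nat -> R).

Definition step pi r : R := t (r %/ K)%N (r %% K)%N * pi (r %/ K)%N (r %% K)%N.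

Lemma dcoefE pi j : dcoef K t pi j = cumsum (step pi) (j * K).
Proof. by []. Qed.

Lemma ecoefE pi j : ecoef K t pi j = cumprod (step pi) (j * K).
Proof. by []. Qed.

Lemma step_row pi j i : (i < K)%N -> step pi (j * K + i) = t j i * pi j i.
Proof. by move=> lt_iK; rewrite /step divnMDl // divn_small // addn0 modnMDl modn_small. Qed.

Lemma cumprod_step_row pi j i : (i <= K)%N ->
  cumprod (step pi) (j * K + i) = cumprod (step pi) (j * K) * \prod_(l < i) (t j l * pi j l).
Proof.
elim: i => [|i IH] le_iK; first by rewrite addn0 big_ord0 mulr1.
by rewrite addnS cumprodS IH 1?ltnW // big_ord_recr /= mulrA step_row.
Qed.

Definition eq_rows j pi pi' := forall k i, (k < j)%N -> (i < K)%N -> pi k i = pi' k i.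

Lemma eq_cumprod_step j pi pi' q : eq_rows j pi pi' -> (q <= j * K)%N ->
  cumprod (step pi) q = cumprod (step pi') q.
Proof.
move=> eq_pi le_q; apply: eq_bigr => r _; rewrite /step eq_pi ?ltn_mod //.
by rewrite ltn_divLR //; apply: leq_trans le_q.
Qed.

Lemma eq_cumsum_step j pi pi' n : eq_rows j pi pi' -> (n <= j * K)%N ->
  cumsum (step pi) n = cumsum (step pi') n.
Proof.
move=> eq_pi le_n; apply: eq_bigr => q _; apply: eq_cumprod_step eq_pi _.
by have := ltn_ord q; lia.
Qed.

(* [formula U K t c pi] unfolds to [forall j, j < U -> roweq (c j) pi j]. *)
Definition roweq (cj : R) pi j : Prop :=
  pi j 0%N = cj * dcoef K t pi j /\
  forall i, (0 < i < K)%N ->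
    pi j i = pi j i.-1 + cj * ecoef K t pi j * \prod_(l < i) (t j l * pi j l).

Lemma roweq_row_iter cj pi j : roweq cj pi j <->
  forall i, (i < K)%N -> pi j i = (row_iter cj (dcoef K t pi j) (ecoef K t pi j) (t j) i).1.
Proof. by symmetry; apply: row_iter_spec. Qed.

Lemma eq_roweq cj pi pi' j : eq_rows j.+1 pi pi' -> roweq cj pi j -> roweq cj pi' j.
Proof.
move=> eq_pi /roweq_row_iter row; apply/roweq_row_iter => i lt_iK.
have eq_prev : eq_rows j pi pi' by move=> k l lt_kj; apply: eq_pi; apply: ltnW.
by rewrite -eq_pi ?row // dcoefE ecoefE (eq_cumsum_step eq_prev) ?(eq_cumprod_step eq_prev).
Qed.

Lemma roweq_cumsum cj pi j : roweq cj pi j ->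
  forall i, (i < K)%N -> pi j i = cj * cumsum (step pi) (j * K + i).
Proof.
case=> pi0 piS; elim=> [|i IH] lt_iK; first by rewrite addn0 pi0.
rewrite piS ?lt_iK //= IH 1?ltnW // addnS cumsumS -addnS cumprod_step_row 1?ltnW //.
by rewrite ecoefE mulrDr mulrA.
Qed.

Lemma roweq_step_gt0 c pi n : (n <= U)%N ->
  (forall j, (j < n)%N -> 0 < c j /\ roweq (c j) pi j) ->
  forall r, (r < n * K)%N -> 0 < step pi r.
Proof.
move=> le_nU rows; elim/ltn_ind=> r IH lt_r.
have lt_j : (r %/ K < n)%N by rewrite ltn_divLR.
have lt_i : (r %% K < K)%N by rewrite ltn_mod.
have [c_gt0 row] := rows _ lt_j.
rewrite /step (roweq_cumsum row lt_i) -divn_eq mulr_gt0 ?t_gt0 ?mulr_gt0 //.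
  exact: leq_trans le_nU.
by apply: cumsum_gt0 => s lt_sr; apply/ltW/IH => //; apply: ltn_trans lt_r.
Qed.

Lemma admissibleP c pi : admissible U K t c pi <->
  forall j, (j < U)%N -> [/\ 0 < c j, roweq (c j) pi j & \sum_(i < K) pi j i = 1].
Proof.
split=> [[c_gt0 [row sum1]] j lt_jU | rows]; last by split; [|split] => j /rows[].
by split; [exact: c_gt0 | exact: row | exact: sum1].
Qed.

Lemma admissible_step_gt0 c pi : admissible U K t c pi ->
  forall r, (r < U * K)%N -> 0 < step pi r.
Proof. by move/admissibleP=> rows; apply: (roweq_step_gt0 (c := c)) => // j /rows[]; split. Qed.

Lemma admissible_gt0 c pi : admissible U K t c pi ->
  forall j i, (j < U)%N -> (i < K)%N -> 0 < pi j i.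
Proof.
move=> adm j i lt_jU lt_iK; have := admissible_step_gt0 adm (r := j * K + i).
rewrite step_row // pmulr_rgt0 ?t_gt0 //; apply.
have : (j.+1 * K <= U * K)%N by rewrite leq_mul2r lt_jU orbT.
by rewrite mulSnr; lia.
Qed.

Lemma admissible_coef_pos c pi j : admissible U K t c pi -> (j < U)%N ->
  [/\ 0 < dcoef K t pi j, 0 <= ecoef K t pi j & forall l, (l < K)%N -> 0 <= t j l].
Proof.
move=> adm lt_jU.
have step_ge0 s : (s < j * K)%N -> 0 <= step pi s.
  move=> lt_s; apply/ltW/(admissible_step_gt0 adm)/(leq_trans lt_s).
  by rewrite leq_mul2r ltnW ?orbT.
split; [exact: cumsum_gt0 step_ge0 | exact: cumprod_ge0 step_ge0 | by move=> l /(t_gt0 lt_jU)/ltW].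
Qed.

Lemma admissible_uniq c c' pi pi' : admissible U K t c pi -> admissible U K t c' pi' ->
  forall j, (j < U)%N -> c j = c' j /\ forall i, (i < K)%N -> pi j i = pi' j i.
Proof.
move=> adm adm'; elim/ltn_ind=> j IH lt_jU.
have eq_prev : eq_rows j pi pi'.
  by move=> k i lt_kj lt_iK; apply: (IH k lt_kj (ltn_trans lt_kj lt_jU)).2.
have [c_gt0 /roweq_row_iter row sum1] := (admissibleP c pi).1 adm j lt_jU.
have [c'_gt0 /roweq_row_iter row' sum1'] := (admissibleP c' pi').1 adm' j lt_jU.
have [d_gt0 e_ge0 tj_ge0] := admissible_coef_pos adm lt_jU.
rewrite dcoefE ecoefE -(eq_cumsum_step eq_prev) // -(eq_cumprod_step eq_prev) // in row'.
rewrite dcoefE ecoefE in row d_gt0 e_ge0.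
have eq_c : c j = c' j.
  apply: (row_iter_sum_inj K_gt0 (ltW c_gt0) (ltW c'_gt0) d_gt0 e_ge0 tj_ge0).
  transitivity (\sum_(i < K) pi j i); first by apply: eq_bigr => i _; rewrite row.
  by rewrite sum1 -sum1'; apply: eq_bigr => i _; rewrite row'.
by split=> // i lt_iK; rewrite row // row' // eq_c.
Qed.

Lemma admissible_rows_exist n : (n <= U)%N -> exists c pi,
  forall j, (j < n)%N -> [/\ 0 < c j, roweq (c j) pi j & \sum_(i < K) pi j i = 1].
Proof.
elim: n => [|n IH] lt_nU; first by exists (fun=> 1), (fun _ _ => 0).
have [c [pi rows]] := IH (ltnW lt_nU).
have step_ge0 s : (s < n * K)%N -> 0 <= step pi s.
  by move=> lt_s; apply/ltW/(roweq_step_gt0 (c := c) (ltnW lt_nU)) => // j /rows[]; split.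
pose d := dcoef K t pi n; pose e := ecoef K t pi n.
have d_gt0 : 0 < d by apply: cumsum_gt0 step_ge0.
have e_ge0 : 0 <= e by apply: cumprod_ge0 step_ge0.
have tn_ge0 l : (l < K)%N -> 0 <= t n l by move/(t_gt0 lt_nU)/ltW.
have [cn cn_gt0 sum1] := row_iter_sum_root K_gt0 d_gt0 e_ge0 tn_ge0.
pose pi' (k : nat) := if k == n then fun i => (row_iter cn d e (t n) i).1 else pi k.
have eq_prev : eq_rows n pi pi' by move=> k i lt_kn _; rewrite /pi' ltn_eqF.
exists (fun k => if k == n then cn else c k), pi' => j; rewrite ltnS leq_eqVlt.
case: eqP => [-> _ | _ /= lt_jn]; rewrite ?eqxx ?ltn_eqF //.
  split=> //; last by rewrite /pi' eqxx.
  apply/roweq_row_iter => i _.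
  by rewrite dcoefE ecoefE -(eq_cumsum_step eq_prev) // -(eq_cumprod_step eq_prev) // /pi' eqxx.
have [cj_gt0 row sum1j] := rows j lt_jn; split=> //.
  by apply: eq_roweq row => k i lt_kj _; rewrite /pi' ltn_eqF //; apply: leq_trans lt_jn.
by rewrite /pi' ltn_eqF.
Qed.

Lemma admissible_exists : exists c pi, admissible U K t c pi.
Proof.
by have [c [pi rows]] := admissible_rows_exist (leqnn U); exists c, pi; apply/admissibleP.
Qed.

End PolicyRows.

Section RenewalChain.
Variables (R : realType) (U K : nat) (t pi : nat -> nat -> R).
Local Notation N := (U * K)%N.
Local Notation x := (step K t pi).
Hypothesis x_ge0 : forall r, (r < N)%N -> 0 <= x r.

Lemma trans_succ_sum (p : 'I_N.+1 -> R) (m : 'I_N.+1) : (0 < m)%N ->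
  \sum_n p n * trans U K t pi n m = p (inord m.-1) * x m.-1.
Proof.
move=> m_gt0; have lt_mN : (m.-1 < N)%N by have := ltn_ord m; lia.
have m_neq0 : ((m : nat) == 0%N) = false by apply/eqP; lia.
have val_pred : (inord m.-1 : 'I_N.+1) = m.-1 :> nat by rewrite inordK //; lia.
rewrite (bigD1 (inord m.-1)) //= big1 ?addr0.
  by rewrite /trans val_pred lt_mN /= prednK // eqxx m_neq0 addr0.
move=> n n_neq; rewrite /trans m_neq0; case: ifP => _; last by rewrite mulr0.
case: eqP => [eq_mn | _]; last by rewrite !addr0 mulr0.
have eq_n : n = inord m.-1 by apply: val_inj; rewrite /= val_pred eq_mn.
by rewrite eq_n eqxx in n_neq.
Qed.

Lemma stationary_cumprod p : is_stationary _ (trans U K t pi) p ->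
  forall m, (m <= N)%N -> p (inord m) = p ord0 * cumprod x m.
Proof.
case=> _ [_ balance]; elim=> [|m IH] le_mN.
  by rewrite cumprod0 mulr1; congr p; apply: val_inj; rewrite /= inordK.
have := balance (inord m.+1); rewrite trans_succ_sum inordK //= => <-.
by rewrite IH 1?ltnW // cumprodS mulrA.
Qed.

Lemma stationary_ord_max p : is_stationary _ (trans U K t pi) p ->
  p ord_max = cumprod x N / cumsum x N.
Proof.
move=> stat; have S_neq0 : cumsum x N != 0 by rewrite gt_eqF // cumsum_gt0.
have p0 : p ord0 * cumsum x N = 1.
  have [_ [<- _]] := stat; rewrite mulr_sumr; apply: eq_bigr => m _.
  by rewrite -(stationary_cumprod stat) ?inord_val // -ltnS.
have -> : p ord_max = p (inord N) by congr p; apply: val_inj; rewrite /= inordK.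
rewrite (stationary_cumprod stat) // mulrC; congr (_ * _).
by rewrite -[p ord0]mulr1 -(mulfV S_neq0) mulrA p0 mul1r.
Qed.

Lemma is_stationary_renewal :
  is_stationary _ (trans U K t pi) (fun m => cumprod x m / cumsum x N).
Proof.
have S_gt0 : 0 < cumsum x N by exact: cumsum_gt0.
split; [|split].
- move=> m; apply: divr_ge0 (ltW S_gt0); apply: cumprod_ge0 => s lt_sm.
  by apply: x_ge0; apply: leq_trans lt_sm _; rewrite -ltnS.
- by rewrite -mulr_suml divff ?gt_eqF.
case=> -[|m] lt_m; last first.
  by rewrite trans_succ_sum //= inordK 1?ltnW // cumprodS mulrAC.
have -> : Ordinal lt_m = ord0 by apply: val_inj.
have trans0 (n : 'I_N.+1) : trans U K t pi n ord0 = if (n < N)%N then 1 - x n else 1.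
  by rewrite /trans add0r.
under eq_bigr do rewrite trans0.
rewrite big_ord_recr /= ltnn mulr1.
under eq_bigr => n _ do rewrite ltn_ord mulrBr mulr1 mulrAC -mulrBl -cumprodS.
rewrite -mulr_suml -mulrDl; congr (_ / _).
have := telescope_sumr (cumprod x) (leq0n N); rewrite big_mkord !sumrB; lra.
Qed.

End RenewalChain.

Lemma sum_ord_divmod (V : nmodType) U K (f : nat -> nat -> V) :
  \sum_(r < U * K) f (r %/ K)%N (r %% K)%N = \sum_(j < U) \sum_(i < K) f j i.
Proof.
elim: U => [|U IH]; first by rewrite mul0n !big_ord0.
rewrite mulSnr big_split_ord /= IH big_ord_recr /=; congr (_ + _).
apply: eq_bigr => i _; have lt_iK := ltn_ord i.
by rewrite divnMDl ?divn_small ?addn0 ?modnMDl ?modn_small //; apply: leq_ltn_trans lt_iK.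
Qed.

Section Optimality.
Variables (R : realType) (U K : nat) (t : nat -> nat -> R).
Hypothesis K_gt0 : (0 < K)%N.
Hypothesis t_gt0 : forall j i, (j < U)%N -> (i < K)%N -> 0 < t j i.
Implicit Types (pi : nat -> nat -> R) (c : nat -> R).

Lemma admissible_policy c pi : admissible U K t c pi -> is_policy U K pi.
Proof.
move=> adm j lt_jU; have [_ _ sum1] := (admissibleP U K t c pi).1 adm j lt_jU.
by split=> // i lt_iK; apply/ltW/(admissible_gt0 K_gt0 t_gt0 adm).
Qed.

Lemma policy_step_ge0 pi : is_policy U K pi -> forall r, (r < U * K)%N -> 0 <= step K t pi r.
Proof.
move=> pol r lt_r; have lt_j : (r %/ K < U)%N by rewrite ltn_divLR.
have lt_i : (r %% K < K)%N by rewrite ltn_mod.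
have [pi_ge0 _] := pol _ lt_j.
exact: mulr_ge0 (ltW (t_gt0 lt_j lt_i)) (pi_ge0 _ lt_i).
Qed.

(* Since [cumsum (step pi) r = pi_r / c_j] on row [j], each row contributes [(1 - 1) / c_j]. *)
Lemma admissible_gradient c pi pi' : admissible U K t c pi -> is_policy U K pi' ->
  \sum_(r < U * K) cumsum (step K t pi) r * (step K t pi' r / step K t pi r - 1) = 0.
Proof.
move=> adm pol.
have term (r : 'I_(U * K)) :
    cumsum (step K t pi) r * (step K t pi' r / step K t pi r - 1) =
    (pi' (r %/ K)%N (r %% K)%N - pi (r %/ K)%N (r %% K)%N) / c (r %/ K)%N.
  have lt_j : (r %/ K < U)%N by rewrite ltn_divLR.
  have lt_i : (r %% K < K)%N by rewrite ltn_mod.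
  have [c_gt0 row _] := (admissibleP U K t c pi).1 adm _ lt_j.
  have D_gt0 : 0 < cumsum (step K t pi) r.
    apply: cumsum_gt0 => s lt_sr.
    exact/ltW/(admissible_step_gt0 K_gt0 t_gt0 adm)/(ltn_trans lt_sr).
  have t_pos := t_gt0 lt_j lt_i.
  rewrite /step (roweq_cumsum K_gt0 row lt_i) -divn_eq.
  by field; rewrite !gt_eqF.
under eq_bigr do rewrite term.
rewrite (@sum_ord_divmod _ U K (fun j i => (pi' j i - pi j i) / c j)) big1 // => j _.
have [_ _ sum1] := (admissibleP U K t c pi).1 adm j (ltn_ord j).
by rewrite -mulr_suml sumrB sum1 (pol j (ltn_ord j)).2 subrr mul0r.
Qed.

Lemma admissible_optimal c pi pi' (p p' : 'I_(U * K).+1 -> R) :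
  admissible U K t c pi -> is_policy U K pi' ->
  is_stationary _ (trans U K t pi) p -> is_stationary _ (trans U K t pi') p' ->
  p' ord_max <= p ord_max.
Proof.
move=> adm pol stat stat'.
have x_gt0 := admissible_step_gt0 K_gt0 t_gt0 adm.
have y_ge0 := policy_step_ge0 pol.
have x_ge0 r : (r < U * K)%N -> 0 <= step K t pi r by move/x_gt0/ltW.
rewrite (stationary_ord_max x_ge0 stat) (stationary_ord_max y_ge0 stat').
have [P_eq0 | P_neq0] := eqVneq (cumprod (step K t pi') (U * K)) 0.
  by rewrite P_eq0 mul0r divr_ge0 ?cumprod_ge0 ?ltW ?cumsum_gt0.
apply: cumprod_div_cumsum_le => //; last by rewrite (admissible_gradient adm pol).
move=> r lt_r; rewrite lt_neqAle y_ge0 // andbT eq_sym.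
apply: contraNneq P_neq0 => y_eq0.
by rewrite /cumprod (bigD1 (Ordinal lt_r)) //= y_eq0 mul0r.
Qed.

End Optimality.

Unset Implicit Arguments.

Theorem proposition13 (R : realType) (U K : nat) (t : nat -> nat -> R)
    (hU : (0 < U)%N) (hK : (0 < K)%N)
    (ht : forall j i, (j < U)%N -> (i < K)%N -> 0 < t j i <= 1) :
  (* existence of positive c_j solving the row-sum equations *)
  (exists (c : nat -> R) (pi : nat -> nat -> R), admissible U K t c pi) /\
  (* uniqueness of the c_j *)
  (forall (c c' : nat -> R) (pi pi' : nat -> nat -> R),
      admissible U K t c pi -> admissible U K t c' pi' ->
      forall j, (j < U)%N -> c j = c' j) /\
  (* the resulting policy is an optimal memoryless policy *)
  (forall (c : nat -> R) (pi : nat -> nat -> R),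
      admissible U K t c pi ->
      is_policy U K pi /\
      (exists p, is_stationary _ (trans U K t pi) p) /\
      forall (pi' : nat -> nat -> R), is_policy U K pi' ->
      forall p p' : 'I_(U * K).+1 -> R,
        is_stationary _ (trans U K t pi) p ->
        is_stationary _ (trans U K t pi') p' ->
        p' ord_max <= p ord_max).
Proof.
have t_gt0 j i : (j < U)%N -> (i < K)%N -> 0 < t j i.
  by move=> lt_jU lt_iK; case/andP: (ht j i lt_jU lt_iK).
split; first exact: admissible_exists hK t_gt0.
split=> [c c' pi pi' adm adm' j lt_jU | c pi adm].
  exact: (admissible_uniq hK t_gt0 adm adm' lt_jU).1.
split; first exact: (admissible_policy hK t_gt0 adm).
split; first by eexists; apply: is_stationary_renewal => r /(admissible_step_gt0 hK t_gt0 adm)/ltW.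
by move=> pi' pol p p'; apply: (admissible_optimal (p := p) (p' := p') hK t_gt0 adm pol).
Qed.
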